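(* Let $\Gamma$ be a pre-automatic structure with generating alphabet $A$, and suppose that $\sigma : A^* \to S$ and $\tau : A^* \to T$ are interpretations of $\Gamma$ with respect to semigroups $S$ and $T$ respectively. Then $S$ and $T$ are isomorphic.
   Context: Let $A$ be a finite alphabet, $\$ \notin A$ a new symbol, $A^\$ = A\cup\{\$\}$. Define $\delta : A^*\times A^* \to (A^\$\times A^\$)^*$ by padding the shorter word on the right with $\$$ and reading the two words letter by letter as a word of pairs: for $a_i,b_j\in A$, $\delta(a_1\cdots a_m,b_1\cdots b_n)=(a_1,b_1)\cdots(a_m,b_m)(\$,b_{m+1})\cdots(\$,b_n)$ if $m<n$, $(a_1,b_1)\cdots(a_m,b_m)$ if $m=n$, and $(a_1,b_1)\cdots(a_n,b_n)(a_{n+1},\$)\cdots(a_m,\$)$ if $m>n$. A synchronous automaton over $A$ is a finite automaton over the alphabet $A^\$\times A^\$$; it recognises a relation $R\subseteq A^*\times A^*$ if the language it accepts is exactly $\delta(R)$. A pre-automatic structure $\Gamma$ consists of: a finite alphabet $A$ of generators; a finite automaton recognising a language $L\subseteq A^*$ (the language of representatives); a synchronous automaton recognising a relation $L_=\subseteq L\times L$; and for each $a\in A$ a synchronous automaton recognising a relation $L_a\subseteq L\times L$. An interpretation of $\Gamma$ with respect to a semigroup $S$ is a morphism $\sigma : A^*\to S$ such that (i) $\sigma(L)=S$; (ii) for $u,v\in L$, $(u,v)\in L_=$ iff $\sigma(u)=\sigma(v)$; (iii) for each $a\in A$ and $u,v\in L$, $(u,v)\in L_a$ iff $\sigma(ua)=\sigma(v)$.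 *)

From mathcomp Require Import all_boot.
Set Implicit Arguments. Unset Strict Implicit. Unset Printing Implicit Defensive.

Record dfa (X : finType) := Dfa {
  dfa_state : finType;
  dfa_init : dfa_state;
  dfa_final : pred dfa_state;
  dfa_trans : dfa_state -> X -> dfa_state }.

Definition accepts (X : finType) (M : dfa X) (w : seq X) : bool :=
  @dfa_final X M (foldl (@dfa_trans X M) (@dfa_init X M) w).

(* A^$ = option A, with None playing the role of the padding symbol $. *)
Definition padsym (A : finType) : finType := option A.
Definition pairsym (A : finType) : finType := (option A * option A)%type.

Definition pad (A : Type) (n : nat) (w : seq A) : seq (option A) :=
  map Some w ++ nseq (n - size w) None.

Definition delta (A : finType) (u v : seq A) : seq (pairsym A) :=
  let n := maxn (size u) (size v) in zip (pad n u) (pad n v).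

Definition recognises_rel (A : finType) (M : dfa (pairsym A))
  (R : seq A -> seq A -> Prop) : Prop :=
  forall w, accepts M w <-> exists u v, R u v /\ w = delta u v.

Record pre_automatic (A : finType) := PreAutomatic {
  L_aut : dfa A;
  Leq_aut : dfa (pairsym A);
  Lgen_aut : A -> dfa (pairsym A);
  Leq : seq A -> seq A -> Prop;
  Lgen : A -> seq A -> seq A -> Prop;
  Leq_rec : recognises_rel Leq_aut Leq;
  Lgen_rec : forall a, recognises_rel (Lgen_aut a) (Lgen a);
  Leq_sub : forall u v, Leq u v -> accepts L_aut u /\ accepts L_aut v;
  Lgen_sub : forall a u v, Lgen a u v -> accepts L_aut u /\ accepts L_aut v }.

Definition inL (A : finType) (G : pre_automatic A) (u : seq A) : bool :=
  accepts (L_aut G) u.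

Definition morphism_from_words (A : Type) (S : Type) (mulS : S -> S -> S)
  (sigma : seq A -> S) : Prop :=
  forall u v, sigma (u ++ v) = mulS (sigma u) (sigma v).

Definition interpretation (A : finType) (G : pre_automatic A)
  (S : Type) (mulS : S -> S -> S) (sigma : seq A -> S) : Prop :=
  [/\ morphism_from_words mulS sigma,
      (forall s, exists2 u, inL G u & sigma u = s),
      (forall u v, inL G u -> inL G v -> (Leq G u v <-> sigma u = sigma v))
    &
      (forall a u v, inL G u -> inL G v ->
         (Lgen G a u v <-> sigma (rcons u a) = sigma v))].

Definition semigroup_iso (S T : Type) (mulS : S -> S -> S) (mulT : T -> T -> T)
  (f : S -> T) : Prop :=
  bijective f /\ forall x y, f (mulS x y) = mulT (f x) (f y).

(** Two interpretations of the same pre-automatic structure have the same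
    kernel on the language of representatives, since [u, v] in [L] have equal
    images exactly when [(u, v)] is in [L_=].  Hence [sigma u |-> tau u]
    (for [u] in [L]) is a well-defined bijection [S -> T].  It respects products
    because, by the relations [L_a], it also sends [sigma (u w)] to [tau (u w)]
    for every [u] in [L] and every word [w], by induction on [w]. *)

From Stdlib Require Import ClassicalEpsilon.
From mathcomp Require Import all_boot.

Set Implicit Arguments.
Unset Strict Implicit.
Unset Printing Implicit Defensive.

Section Interpretation.

Variables (A : finType) (G : pre_automatic A).
Variables (S : Type) (mulS : S -> S -> S) (sigma : seq A -> S).
Hypothesis Hsigma : interpretation G mulS sigma.

Lemma interpretation_cat u v : sigma (u ++ v) = mulS (sigma u) (sigma v).
Proof. by case: Hsigma. Qed.

Lemma interpretation_rcons u a : sigma (rcons u a) = mulS (sigma u) (sigma [:: a]).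
Proof. by rewrite -cats1 interpretation_cat. Qed.

Lemma interpretation_onto s : exists u, inL G u /\ sigma u = s.
Proof. by case: Hsigma => _ onto _ _; have [u] := onto s; exists u. Qed.

Lemma interpretation_eqE u v :
  inL G u -> inL G v -> Leq G u v <-> sigma u = sigma v.
Proof. by case: Hsigma => _ _ eqE _; apply: eqE. Qed.

Lemma interpretation_genE a u v :
  inL G u -> inL G v -> Lgen G a u v <-> sigma (rcons u a) = sigma v.
Proof. by case: Hsigma => _ _ _ genE; apply: genE. Qed.

Definition rep (s : S) : seq A :=
  proj1_sig (constructive_indefinite_description _ (interpretation_onto s)).

Lemma rep_inL s : inL G (rep s).
Proof. by rewrite /rep; case: constructive_indefinite_description => ? []. Qed.

Lemma repK s : sigma (rep s) = s.
Proof. by rewrite /rep; case: constructive_indefinite_description => ? []. Qed.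

Definition transfer (T : Type) (tau : seq A -> T) (s : S) : T := tau (rep s).

End Interpretation.

Section TwoInterpretations.

Variables (A : finType) (G : pre_automatic A).
Variables (S : Type) (mulS : S -> S -> S) (sigma : seq A -> S).
Variables (T : Type) (mulT : T -> T -> T) (tau : seq A -> T).
Hypotheses (Hsigma : interpretation G mulS sigma) (Htau : interpretation G mulT tau).

Local Notation f := (transfer Hsigma tau).

Lemma interpretation_eq_transfer u v :
  inL G u -> inL G v -> sigma u = sigma v -> tau u = tau v.
Proof.
by move=> Lu Lv /(interpretation_eqE Hsigma Lu Lv)/(interpretation_eqE Htau Lu Lv).
Qed.

Lemma interpretation_gen_transfer a u v :
  inL G u -> inL G v -> sigma (rcons u a) = sigma v -> tau (rcons u a) = tau v.
Proof.
by move=> Lu Lv /(interpretation_genE Hsigma _ Lu Lv)/(interpretation_genE Htau _ Lu Lv).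
Qed.

Lemma transfer_inL u : inL G u -> f (sigma u) = tau u.
Proof. by move=> Lu; apply: interpretation_eq_transfer; rewrite ?rep_inL ?repK. Qed.

Lemma transfer_rcons x a :
  f (sigma x) = tau x -> f (sigma (rcons x a)) = tau (rcons x a).
Proof.
rewrite /transfer; set v := rep Hsigma (sigma x) => tau_v.
have sigma_v : sigma v = sigma x by apply: repK.
have -> : sigma (rcons x a) = sigma (rcons v a).
  by rewrite !(interpretation_rcons Hsigma) sigma_v.
rewrite -(@interpretation_gen_transfer a v (rep Hsigma _)) ?rep_inL ?repK //.
by rewrite !(interpretation_rcons Htau) tau_v.
Qed.

Lemma transfer_cat u w : inL G u -> f (sigma (u ++ w)) = tau (u ++ w).
Proof.
move=> Lu; elim/last_ind: w => [|w a IHw]; first by rewrite cats0 transfer_inL.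
by rewrite -rcons_cat; apply: transfer_rcons.
Qed.

Lemma transfer_mul x y : f (mulS x y) = mulT (f x) (f y).
Proof.
rewrite -{1}(repK Hsigma x) -{1}(repK Hsigma y) -(interpretation_cat Hsigma).
by rewrite transfer_cat ?rep_inL // (interpretation_cat Htau).
Qed.

End TwoInterpretations.

Lemma transferK (A : finType) (G : pre_automatic A)
    (S : Type) (mulS : S -> S -> S) (sigma : seq A -> S)
    (T : Type) (mulT : T -> T -> T) (tau : seq A -> T)
    (Hsigma : interpretation G mulS sigma) (Htau : interpretation G mulT tau) :
  cancel (transfer Hsigma tau) (transfer Htau sigma).
Proof.
move=> s; rewrite -[RHS](repK Hsigma s).
exact: (transfer_inL Htau Hsigma (rep_inL Hsigma s)).
Qed.

Theorem proposition2p3 (A : finType) (G : pre_automatic A)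
  (S : Type) (mulS : S -> S -> S) (assocS : associative mulS)
  (T : Type) (mulT : T -> T -> T) (assocT : associative mulT)
  (sigma : seq A -> S) (tau : seq A -> T)
  (Hsigma : interpretation G mulS sigma)
  (Htau : interpretation G mulT tau) :
  exists f : S -> T, semigroup_iso mulS mulT f.
Proof.
exists (transfer Hsigma tau); split; last exact: transfer_mul.
by exists (transfer Htau sigma); apply: transferK.
Qed.
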